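(* Let $G$ be a graph and $l \ge \gamma(G)$ an integer, and let $A$ and $B$ be dominating sets of $G$ with $|A| = |B| = l$. If there is a path in $D_{l+1}(G)$ joining $A$ and $B$, then there exists a walk between $A$ and $B$ in $D_{l+1}(G)$ all of whose vertices are dominating sets of cardinality $l$ or $l+1$.
   Context: All graphs are finite and simple. A set $S \subseteq V(G)$ is a dominating set of $G$ if every vertex of $V(G)\setminus S$ is adjacent to a vertex of $S$. $\gamma(G)$ is the minimum cardinality of a dominating set of $G$. For an integer $k \ge \gamma(G)$, the $k$-dominating graph $D_k(G)$ is the graph whose vertices are the dominating sets of $G$ of cardinality at most $k$, with two such sets $A,B$ adjacent if and only if their symmetric difference $(A\setminus B)\cup(B\setminus A)$ consists of exactly one vertex of $G$. *)

(* A finite simple graph G is a vertex type T : finType with a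
   symmetric irreflexive adjacency relation e : rel T. *)
From mathcomp Require Import all_boot.
Set Implicit Arguments. Unset Strict Implicit. Unset Printing Implicit Defensive.

Section Dom.
Variables (T : finType) (e : rel T).

Definition dominating (S : {set T}) : bool :=
  [forall x, (x \notin S) ==> [exists y in S, e x y]].

(* domination number gamma(G): minimum cardinality of a dominating set
   (the full vertex set is always dominating, so #|T| is a valid default). *)
Definition gamma : nat :=
  \big[minn/#|T|]_(S : {set T} | dominating S) #|S|.

Definition Dk_vertex (k : nat) (S : {set T}) : bool :=
  dominating S && (#|S| <= k).

Definition Dk_adj (k : nat) : rel {set T} :=
  fun A B => [&& Dk_vertex k A, Dk_vertex k B &
                 #|(A :\: B) :|: (B :\: A)| == 1].
End Dom.

From mathcomp Require Import all_boot.
From mathcomp Require Import zify.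
Set Implicit Arguments. Unset Strict Implicit. Unset Printing Implicit Defensive.

(* Call a set of vertices "levelled" if it has l or l+1
   elements, and call X, Y "level-connected" if some walk in D_{l+1}(G) from
   X to Y visits only levelled sets.  The heart of the argument is:

     if D is a dominating set with |D| <= l, then any two levelled supersets
     of D are level-connected.

   Indeed every superset of D is dominating; a superset of size l+1 is
   adjacent to a superset of size l (drop a vertex outside D), and two
   supersets X, Y of size l are joined by repeatedly adding a vertex of
   Y \ X and then removing a vertex of X \ Y.  Now take the given path
   A = S_0, S_1, ..., S_n = B in D_{l+1}(G).  Two adjacent vertices of
   D_{k}(G) are nested and the smaller one is a dominating set of size < k,
   so S_i and S_{i+1} share a dominating subset of size <= l.  Enlarging
   every S_i to a levelled superset X_i, consecutive X_i are therefore
   level-connected, and concatenating these walks joins A to B. *)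

Section DominatingGraph.
Variables (T : finType) (e : rel T).

Lemma dominating_superset (D S : {set T}) :
  dominating e D -> D \subset S -> dominating e S.
Proof.
move=> /forallP domD DS; apply/forallP => x; apply/implyP => xS.
have xD : x \notin D by apply: contra xS; apply: (subsetP DS).
have /existsP [y /andP [yD exy]] := implyP (domD x) xD.
by apply/existsP; exists y; rewrite (subsetP DS y yD).
Qed.

Lemma Dk_adj_sym (k : nat) : symmetric (Dk_adj e k).
Proof.
move=> A B; rewrite /Dk_adj setUC.
by case: (Dk_vertex e k A); case: (Dk_vertex e k B).
Qed.

Lemma Dk_adj_addv (k : nat) (X : {set T}) (y : T) :
  y \notin X -> dominating e X -> #|y |: X| <= k -> Dk_adj e k X (y |: X).
Proof.
move=> yX domX cardyX.
have domyX : dominating e (y |: X).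
  by apply: dominating_superset domX _; apply: subsetUr.
have cardX : #|X| <= k by apply: leq_trans cardyX; rewrite subset_leq_card ?subsetUr.
rewrite /Dk_adj /Dk_vertex domX domyX cardX cardyX /=.
suff -> : (X :\: (y |: X)) :|: ((y |: X) :\: X) = [set y] by rewrite cards1.
apply/setP => z; rewrite !inE.
by have [->|_] := eqVneq z y; [rewrite (negbTE yX) | case: (z \in X)].
Qed.

(* Adjacent vertices of D_k(G) are nested, so they share a dominating
   subset (the smaller of the two) of size less than k. *)
Lemma Dk_adj_common_dominating (k : nat) (S S' : {set T}) :
  Dk_adj e k S S' ->
  exists D : {set T}, [/\ dominating e D, #|D| < k, D \subset S & D \subset S'].
Proof.
case/and3P => /andP [domS cardS] /andP [domS' cardS'] /eqP card_diff.
have disjoint_diffs : (S :\: S') :&: (S' :\: S) = set0.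
  by apply/setP => z; rewrite !inE; case: (z \in S); case: (z \in S').
move: card_diff; rewrite cardsU disjoint_diffs cards0 subn0.
have [SS'|] := eqVneq #|S :\: S'| 0.
- have subSS' : S \subset S' by rewrite -setD_eq0 -cards_eq0 SS'.
  move=> diff1; exists S; split => //.
  by move: (cardsID S S'); rewrite (setIidPr subSS'); lia.
- move=> S'S diff1; have subS'S : S' \subset S.
    by rewrite -setD_eq0 -cards_eq0; apply/eqP; lia.
  exists S'; split => //.
  by move: (cardsID S' S); rewrite (setIidPr subS'S); lia.
Qed.

Lemma superset_of_card (S : {set T}) (n : nat) :
  #|S| <= n <= #|T| -> exists X : {set T}, S \subset X /\ #|X| = n.
Proof.
elim: n => [|n IH] /andP [Sn nT]; first by exists S; split => //; lia.
have [Sn1|Sn1] := eqVneq #|S| n.+1; first by exists S.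
have [X [SX cardX]] : exists X : {set T}, S \subset X /\ #|X| = n by apply: IH; lia.
have /card_gt0P [z] : 0 < #|~: X| by rewrite cardsCs setCK; lia.
rewrite inE => zX; exists (z |: X).
by rewrite cardsU1 zX cardX (subset_trans SX (subsetUr _ _)).
Qed.

End DominatingGraph.

Section LevelledWalks.
Variables (T : finType) (e : rel T) (l : nat).

Definition levelled (S : {set T}) : bool := (#|S| == l) || (#|S| == l.+1).

Definition level_connected (X Y : {set T}) : Prop :=
  exists w : seq {set T},
    [/\ path (Dk_adj e l.+1) X w, last X w = Y & all levelled (X :: w)].

Lemma level_connected_refl (X : {set T}) : levelled X -> level_connected X X.
Proof. by move=> levX; exists [::]; rewrite /= levX. Qed.

Lemma level_connected_edge (X Y : {set T}) :
  Dk_adj e l.+1 X Y -> levelled X -> levelled Y -> level_connected X Y.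
Proof. by move=> XY levX levY; exists [:: Y]; rewrite /= XY levX levY. Qed.

Lemma level_connected_trans (X Y Z : {set T}) :
  level_connected X Y -> level_connected Y Z -> level_connected X Z.
Proof.
move=> [w1 [path1 last1 lev1]] [w2 [path2 last2 /andP [_ lev2]]].
exists (w1 ++ w2); split; first by rewrite cat_path path1 last1.
- by rewrite last_cat last1.
- by rewrite -cat_cons all_cat lev1.
Qed.

Lemma levelled_l (X : {set T}) : #|X| = l -> levelled X.
Proof. by rewrite /levelled => ->; rewrite eqxx. Qed.

Lemma levelled_l1 (X : {set T}) : #|X| = l.+1 -> levelled X.
Proof. by rewrite /levelled => ->; rewrite eqxx orbT. Qed.

Lemma shrink_superset (D X : {set T}) :
  dominating e D -> #|D| <= l -> D \subset X -> #|X| = l.+1 ->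
  exists X' : {set T}, [/\ D \subset X', #|X'| = l & Dk_adj e l.+1 X' X].
Proof.
move=> domD cardD DX cardX.
have /card_gt0P [x] : 0 < #|X :\: D| by rewrite cardsD (setIidPr DX); lia.
rewrite inE => /andP [xD xX].
have DXx : D \subset X :\ x.
  apply/subsetP => z zD; rewrite !inE (subsetP DX z zD) andbT.
  by apply: contraNneq xD => <-.
exists (X :\ x); split => //; first by move: (cardsD1 x X); rewrite xX cardX => -[].
rewrite -{2}(setD1K xX); apply: Dk_adj_addv; first by rewrite !inE eqxx.
- exact: dominating_superset domD DXx.
- by rewrite setD1K // cardX.
Qed.

(* Exchanging x in X for y outside X, while keeping the dominating set D,
   takes two moves through a set of size l+1. *)
Lemma exchange_vertex (D X : {set T}) (x y : T) :
  dominating e D -> D \subset X -> #|X| = l -> x \in X -> x \notin D ->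
  y \notin X -> level_connected X ((y |: X) :\ x).
Proof.
move=> domD DX cardX xX xD yX.
have xyX : x \in y |: X by rewrite !inE xX orbT.
have cardyX : #|y |: X| = l.+1 by rewrite cardsU1 yX cardX.
have DyXx : D \subset (y |: X) :\ x.
  apply/subsetP => z zD; rewrite !inE (subsetP DX z zD) !orbT andbT.
  by apply: contraNneq xD => <-.
apply: (@level_connected_trans _ (y |: X)); apply: level_connected_edge.
- by rewrite Dk_adj_addv ?cardyX // (dominating_superset domD DX).
- exact: levelled_l.
- exact: levelled_l1.
- rewrite Dk_adj_sym -{2}(setD1K xyX); apply: Dk_adj_addv.
  + by rewrite !inE eqxx.
  + exact: dominating_superset domD DyXx.
  + by rewrite setD1K // cardyX.
- exact: levelled_l1.
- by apply: levelled_l; move: (cardsD1 x (y |: X)); rewrite xyX cardyX => -[].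
Qed.

Lemma swap_supersets (D X Y : {set T}) :
  dominating e D -> D \subset X -> D \subset Y -> #|X| = l -> #|Y| = l ->
  level_connected X Y.
Proof.
move=> domD + DY + cardY; have [n] := ubnP #|X :\: Y|.
elim: n X => // n IH X; rewrite ltnS => cardXY DX cardX.
have [XY0|] := posnP #|X :\: Y|.
  have XY : X \subset Y by rewrite -setD_eq0 -cards_eq0 XY0.
  have -> : X = Y by apply/eqP; rewrite eqEcard XY cardX cardY leqnn.
  exact/level_connected_refl/levelled_l.
move=> XYpos; have /card_gt0P [x] := XYpos; rewrite inE => /andP [xY xX].
have /card_gt0P [y] : 0 < #|Y :\: X| by move: XYpos; rewrite !cardsD setIC; lia.
rewrite inE => /andP [yX yY].
have xD : x \notin D by apply: contra xY; apply: (subsetP DY).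
apply: level_connected_trans (exchange_vertex domD DX cardX xX xD yX) _.
apply: IH.
- have -> : ((y |: X) :\ x) :\: Y = (X :\: Y) :\ x.
    apply/setP => z; rewrite !inE.
    by have [->|_] := eqVneq z y; rewrite ?yY ?andbF //= andbCA.
  by move: (cardsD1 x (X :\: Y)); rewrite !inE xY xX; lia.
- apply/subsetP => z zD; rewrite !inE (subsetP DX z zD) !orbT andbT.
  by apply: contraNneq xD => <-.
- by move: (cardsD1 x (y |: X)); rewrite !inE xX orbT cardsU1 yX cardX => -[].
Qed.

Lemma level_connected_supersets (D X Y : {set T}) :
  dominating e D -> #|D| <= l -> D \subset X -> D \subset Y ->
  levelled X -> levelled Y -> level_connected X Y.
Proof.
move=> domD cardD DX DY levX levY.
have to_card_l (Z : {set T}) : D \subset Z -> levelled Z ->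
    exists Z' : {set T}, [/\ D \subset Z', #|Z'| = l, level_connected Z Z' & level_connected Z' Z].
  move=> DZ /orP [/eqP cardZ|/eqP cardZ].
    by exists Z; split => //; apply: level_connected_refl; apply: levelled_l.
  have [Z' [DZ' cardZ' Z'Z]] := shrink_superset domD cardD DZ cardZ.
  have [levZ levZ'] := (levelled_l1 cardZ, levelled_l cardZ').
  by exists Z'; split => //; apply: level_connected_edge; rewrite // Dk_adj_sym.
have [X' [DX' cardX' XX' _]] := to_card_l X DX levX.
have [Y' [DY' cardY' _ Y'Y]] := to_card_l Y DY levY.
apply: level_connected_trans XX' (level_connected_trans _ Y'Y).
exact: swap_supersets DX' DY' cardX' cardY'.
Qed.

Lemma levelled_superset (S : {set T}) :
  l <= #|T| -> #|S| <= l.+1 -> exists X : {set T}, S \subset X /\ levelled X.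
Proof.
move=> lT cardS; have [Sl1|Sl1] := eqVneq #|S| l.+1.
  by exists S; rewrite levelled_l1.
have [X [SX cardX]] : exists X : {set T}, S \subset X /\ #|X| = l.
  by apply: superset_of_card; lia.
by exists X; rewrite levelled_l.
Qed.

Lemma level_connected_along_path (B : {set T}) (p : seq {set T}) :
  l <= #|T| -> dominating e B -> #|B| = l ->
  forall S X : {set T}, path (Dk_adj e l.+1) S p -> last S p = B ->
  S \subset X -> levelled X -> level_connected X B.
Proof.
move=> lT domB cardB; elim: p => [|S' p IH] S X /=.
  move=> _ -> BX levX; apply: level_connected_supersets domB _ BX _ levX _;
  by rewrite ?cardB ?levelled_l.
case/andP => SS' pathS' lastS' SX levX.
have [D [domD cardD DS DS']] := Dk_adj_common_dominating SS'.
have [X' [S'X' levX']] : exists X' : {set T}, S' \subset X' /\ levelled X'.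
  by case/and3P: SS' => _ /andP [_ cardS'] _; apply: levelled_superset.
apply: level_connected_trans (IH S' X' pathS' lastS' S'X' levX').
apply: level_connected_supersets domD cardD _ _ levX levX'.
- exact: subset_trans DS SX.
- exact: subset_trans DS' S'X'.
Qed.

End LevelledWalks.

Theorem lemma10 (T : finType) (e : rel T)
    (e_sym : symmetric e) (e_irr : irreflexive e)
    (l : nat) (hl : gamma e <= l)
    (A B : {set T}) (hA : dominating e A) (hB : dominating e B)
    (cA : #|A| = l) (cB : #|B| = l) :
  (exists p : seq {set T},
      [/\ path (Dk_adj e l.+1) A p, last A p = B & uniq (A :: p)]) ->
  exists w : seq {set T},
    [/\ path (Dk_adj e l.+1) A w, last A w = B &
        all (fun S : {set T} => (#|S| == l) || (#|S| == l.+1)) (A :: w)].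
Proof.
case=> p [pathA lastA _].
have lT : l <= #|T| by rewrite -cA max_card.
exact: (level_connected_along_path lT hB cB pathA lastA (subxx A) (levelled_l cA)).
Qed.
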